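(* Let $\mathbb{U}_m\subset\mathbb{R}^m$ be a compact convex polytope and $\Delta=(\Delta_i)_{i\in I}$ a simplicial mesh of $\mathbb{R}^n\times\mathbb{U}_m$ such that (1) the family $D=(D_q)_{q\in\mathcal{Q}}$ of projections $p(\Delta_i)$ of the cells onto $\mathbb{R}^n$ is a simplicial mesh of $\mathbb{R}^n$, and (2) for all $i,j\in I$, either $p(\Delta_i)=p(\Delta_j)$ or the interiors of $p(\Delta_i)$ and $p(\Delta_j)$ are disjoint. For $q\in\mathcal{Q}$ let $\mathcal{K}(q)=\{i\in I : p(\Delta_i)=D_q\}$. Then for every $q\in\mathcal{Q}$, $$D_q\times\mathbb{U}_m=\bigcup_{q'\in\mathcal{K}(q)}\Delta_{q'}.$$
   Context: $p:\mathbb{R}^n\times\mathbb{R}^m\to\mathbb{R}^n$ denotes the orthogonal projection onto the state space $\mathbb{R}^n$. A simplicial mesh of a set $E\subset\mathbb{R}^k$ is a locally finite family of $k$-simplices covering $E$, any two of which intersect in a common face (possibly empty). *)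

From HB Require Import structures.
From mathcomp Require Import all_boot all_order all_algebra.
From mathcomp Require Import all_classical all_reals all_analysis.
Set Implicit Arguments. Unset Strict Implicit. Unset Printing Implicit Defensive.
Import Order.TTheory GRing.Theory Num.Theory.
Import numFieldNormedType.Exports.
Local Open Scope classical_set_scope.
Local Open Scope ring_scope.

(* Points of R^k are row vectors 'rV[R]_k; R^n x R^m is 'rV[R]_(n + m),
   and the projection p onto R^n is lsubmx. *)

Definition hull_on (R : realType) (k N : nat) (v : 'I_N -> 'rV[R]_k)
  (J : {set 'I_N}) : set 'rV[R]_k :=
  [set x | exists l : 'I_N -> R,
     (forall i, 0 <= l i) /\ (forall i, i \notin J -> l i = 0) /\
     \sum_(i < N) l i = 1 /\ x = \sum_(i < N) l i *: v i].

Definition affinely_indep (R : realType) (k : nat) (v : 'I_k.+1 -> 'rV[R]_k) : Prop :=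
  row_free (\matrix_(i < k) (v (lift ord0 i) - v ord0)).

Definition is_simplex (R : realType) (k : nat) (S : set 'rV[R]_k) : Prop :=
  exists v : 'I_k.+1 -> 'rV[R]_k, affinely_indep v /\ S = hull_on v (finset.setTfor _).

Definition is_face (R : realType) (k : nat) (S F : set 'rV[R]_k) : Prop :=
  exists v : 'I_k.+1 -> 'rV[R]_k, affinely_indep v /\ S = hull_on v (finset.setTfor _) /\
    exists J : {set 'I_k.+1}, F = hull_on v J.

Definition simplicial_mesh (R : realType) (k : nat) (I : Type)
  (T : I -> set 'rV[R]_k) (E : set 'rV[R]_k) : Prop :=
  (forall i, is_simplex (T i)) /\
  (forall x : 'rV[R]_k, exists U, nbhs x U /\
      finite_set [set i | U `&` T i !=set0]) /\
  \bigcup_i T i = E /\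
  (forall i j, is_face (T i) (T i `&` T j) /\ is_face (T j) (T i `&` T j)).

Definition is_polytope (R : realType) (m : nat) (U : set 'rV[R]_m) : Prop :=
  exists (N : nat) (w : 'I_N -> 'rV[R]_m), U = hull_on w (finset.setTfor _).

Definition setXrow (R : realType) (n m : nat) (A : set 'rV[R]_n)
  (B : set 'rV[R]_m) : set 'rV[R]_(n + m) :=
  [set x | A (lsubmx x) /\ B (rsubmx x)].

From HB Require Import structures.
From mathcomp Require Import all_boot all_order all_algebra.
From mathcomp Require Import all_classical all_reals all_analysis.
From mathcomp Require Import lra.
Set Implicit Arguments. Unset Strict Implicit. Unset Printing Implicit Defensive.
Import Order.TTheory GRing.Theory Num.Theory.
Import numFieldNormedType.Exports.
Local Open Scope classical_set_scope.
Local Open Scope ring_scope.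

(* Let x = (y, u) with y in D_q and u in U_m. Pushing y slightly towards the
   barycenter of D_q gives points (y', u) arbitrarily close to x with y' in the
   interior of D_q. Such a point lies in some cell Delta_j, and since p(Delta_j)
   is a simplex containing y', the interiors of p(Delta_j) and D_q meet, so
   p(Delta_j) = D_q by the dichotomy hypothesis. Hence x is in the closure of
   the union of the cells over D_q, and that union is closed because the mesh
   is locally finite. *)

Section SimplexHull.
Variables (R : realType) (k : nat) (v : 'I_k.+1 -> 'rV[R]_k).

Local Notation hull := (hull_on v (finset.setTfor _)).

Definition edge_mx : 'M[R]_k := \matrix_(i < k) (v (lift ord0 i) - v ord0).

(* The barycentric coordinates of x with respect to the vertices v_1, ..., v_k;
   the coordinate along v_0 is 1 minus their sum. *)
Definition bcoord (x : 'rV[R]_k) : 'rV[R]_k := (x - v ord0) *m invmx edge_mx.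

Definition barycenter : 'rV[R]_k := v ord0 + const_mx k.+1%:R^-1 *m edge_mx.

Lemma comb_edge_mx (l : 'I_k.+1 -> R) :
  \sum_j l j *: v j = (\sum_j l j) *: v ord0 + \row_i l (lift ord0 i) *m edge_mx.
Proof.
rewrite mulmx_sum_row big_ord_recl [X in _ = X *: _ + _]big_ord_recl /=.
rewrite scalerDl scaler_suml -addrA; congr (_ + _).
rewrite -big_split /=; apply: eq_bigr => i _.
by rewrite rowK mxE scalerBr addrC subrK.
Qed.

Lemma bcoord_conv (t : R) a b :
  bcoord ((1 - t) *: a + t *: b) = (1 - t) *: bcoord a + t *: bcoord b.
Proof.
rewrite /bcoord.
have -> : (1 - t) *: a + t *: b - v ord0 =
          (1 - t) *: (a - v ord0) + t *: (b - v ord0).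
  by rewrite !scalerBr addrACA -opprD -scalerDl subrK scale1r.
by rewrite mulmxDl -!scalemxAl.
Qed.

Lemma continuous_bcoord i : continuous (fun x => bcoord x 0 i).
Proof.
have -> : (fun x => bcoord x 0 i) =
    (fun x => \sum_(j <- index_enum 'I_k | true)
                (x 0 j - v ord0 0 j) * invmx edge_mx j i).
  by apply: funext => x; rewrite !mxE; apply: eq_bigr => j _; rewrite !mxE.
apply: continuous_big; first exact: add_continuous.
move=> j _ x; apply: cvgMr_tmp; first exact: nbhs_filter.
exact: cvgB (@coord_continuous R 1 k 0 j x) (cvg_cst _).
Qed.

Lemma continuous_sum_bcoord : continuous (fun x => \sum_i bcoord x 0 i).
Proof.
apply: continuous_big; first exact: add_continuous.
by move=> i _; exact: continuous_bcoord.
Qed.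

Hypothesis edge_mx_unit : edge_mx \in unitmx.

Lemma bcoord_barycenter : bcoord barycenter = const_mx k.+1%:R^-1.
Proof. by rewrite /bcoord /barycenter addrC addKr mulmxK. Qed.

Lemma hull_bcoordP x :
  hull x <-> (forall i, 0 <= bcoord x 0 i) /\ \sum_i bcoord x 0 i <= 1.
Proof.
split.
  move=> [l [l_ge0 [_ [l_sum1 ->]]]].
  have -> : bcoord (\sum_j l j *: v j) = \row_i l (lift ord0 i).
    by rewrite /bcoord comb_edge_mx l_sum1 scale1r addrC addKr mulmxK.
  split=> [i|]; first by rewrite mxE.
  under eq_bigr do rewrite mxE.
  move: l_sum1; rewrite big_ord_recl; have := l_ge0 ord0; lra.
move=> [c_ge0 c_sum_le1].
pose l j := if unlift ord0 j is Some i then bcoord x 0 i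
            else 1 - \sum_i bcoord x 0 i.
have l_lift i : l (lift ord0 i) = bcoord x 0 i by rewrite /l liftK.
have l_ord0 : l ord0 = 1 - \sum_i bcoord x 0 i by rewrite /l unlift_none.
have l_sum1 : \sum_j l j = 1.
  by rewrite big_ord_recl; under eq_bigr do rewrite l_lift; rewrite l_ord0 subrK.
exists l; split; [|split; [by move=> i; rewrite finset.in_setT|split=> //]].
  move=> j; case: (unliftP ord0 j) => [i ->|->]; first by rewrite l_lift.
  by rewrite l_ord0 subr_ge0.
rewrite comb_edge_mx l_sum1 scale1r.
have -> : \row_i l (lift ord0 i) = bcoord x by apply/rowP => i; rewrite mxE l_lift.
by rewrite /bcoord mulmxKV // addrC subrK.
Qed.

Lemma closed_hull : closed hull.
Proof.
have -> : hull = \bigcap_(i in setT) ((fun x => bcoord x 0 i) @^-1` [set r | 0 <= r])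
                 `&` (fun x => \sum_i bcoord x 0 i) @^-1` [set r | r <= 1].
  apply/seteqP; split=> x; rewrite /= hull_bcoordP => -[c_ge0 c_sum].
    by split=> // i _; exact: c_ge0.
  by split=> // i; exact: c_ge0.
apply: closedI.
  apply: closed_bigI => i _; apply: (continuous_closedP _).1;
    [exact: continuous_bcoord|exact: closed_ge].
apply: (continuous_closedP _).1; [exact: continuous_sum_bcoord|exact: closed_le].
Qed.

Lemma interior_hull x : (forall i, 0 < bcoord x 0 i) ->
  \sum_i bcoord x 0 i < 1 -> hull° x.
Proof.
move=> c_gt0 c_sum_lt1.
have near_gt0 : \forall z \near x, forall i, 0 < bcoord z 0 i.
  apply: (@filter_forall _ _ (fun i z => 0 < bcoord z 0 i) (nbhs x) _) => i.
  have gt0_nbhs : nbhs (bcoord x 0 i) [set r : R | 0 < r].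
    by apply: open_nbhs_nbhs; split; [exact: open_gt|exact: c_gt0].
  exact: continuous_bcoord gt0_nbhs.
have near_lt1 : \forall z \near x, \sum_i bcoord z 0 i < 1.
  have lt1_nbhs : nbhs (\sum_i bcoord x 0 i) [set r : R | r < 1].
    by apply: open_nbhs_nbhs; split; [exact: open_lt|exact: c_sum_lt1].
  exact: continuous_sum_bcoord lt1_nbhs.
apply: filterS2 near_gt0 near_lt1 => z z_gt0 z_lt1.
by apply/hull_bcoordP; split=> [i|]; apply: ltW.
Qed.

(* The coordinates of the moved point are at least [t / (k + 1)] and their sum
   is at most [1 - t + t k / (k + 1)]. *)
Lemma interior_hull_to_barycenter x t : hull x -> 0 < t <= 1 ->
  hull° ((1 - t) *: x + t *: barycenter).
Proof.
move=> /hull_bcoordP [c_ge0 c_sum] /andP [t_gt0 t_le1].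
have kinv_gt0 : 0 < k.+1%:R^-1 :> R by rewrite invr_gt0 ltr0n.
apply: interior_hull => [i|]; rewrite bcoord_conv bcoord_barycenter;
  move: (bcoord x) c_ge0 c_sum => c c_ge0 c_sum.
  rewrite !mxE; apply: (lt_le_trans (mulr_gt0 t_gt0 kinv_gt0)).
  by rewrite lerDr mulr_ge0 // subr_ge0.
under eq_bigr do rewrite !mxE.
rewrite big_split /= -!mulr_sumr sumr_const card_ord -[X in t * X]mulr_natr.
have le_first : (1 - t) * \sum_i c 0 i <= 1 - t.
  by rewrite -[leRHS]mulr1 ler_wpM2l // subr_ge0.
have lt_second : t * (k.+1%:R^-1 * k%:R) < t.
  by rewrite -[ltRHS]mulr1 ltr_pM2l // mulrC ltr_pdivrMr ?ltr0n // mul1r ltr_nat.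
by have := ler_ltD le_first lt_second; rewrite subrK.
Qed.

End SimplexHull.

Lemma edge_mx_unit_affinely_indep (R : realType) (k : nat)
    (v : 'I_k.+1 -> 'rV[R]_k) :
  affinely_indep v -> edge_mx v \in unitmx.
Proof. by rewrite /affinely_indep -row_free_unit. Qed.

Lemma is_simplex_closed (R : realType) (k : nat) (S : set 'rV[R]_k) :
  is_simplex S -> closed S.
Proof.
move=> [v [v_indep ->]].
exact/closed_hull/edge_mx_unit_affinely_indep.
Qed.

Lemma nbhs_segment (R : realType) (k : nat) (a b : 'rV[R]_k) (V : set 'rV[R]_k) :
  nbhs a V -> exists2 t : R, 0 < t <= 1 & V ((1 - t) *: a + t *: b).
Proof.
move=> /nbhs_ballP [e /= e_gt0 ballV].
set d := `|a - b|.
have de_gt0 : 0 < d + e by exact: ltr_wpDl (normr_ge0 _) e_gt0.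
exists (e / (d + e)).
  by rewrite divr_gt0 //= ler_pdivrMr // mul1r lerDr normr_ge0.
apply: ballV; rewrite -ball_normE /ball_ /=.
have -> : a - ((1 - e / (d + e)) *: a + e / (d + e) *: b) = (e / (d + e)) *: (a - b).
  by rewrite scalerBl scale1r scalerBr opprD opprB addrA [a + _]addrC subrK.
rewrite normrZ ger0_norm ?divr_ge0 ?ltW //.
by rewrite -/d mulrAC ltr_pdivrMr // ltr_pM2l // ltrDl.
Qed.

Lemma simplex_sub_closure_interior (R : realType) (k : nat) (S : set 'rV[R]_k) :
  is_simplex S -> S `<=` closure S°.
Proof.
move=> [v [v_indep ->]] y Sy B By.
have [t t01 Bz] := nbhs_segment (barycenter v) By.
exists ((1 - t) *: y + t *: barycenter v); split=> //.
exact/interior_hull_to_barycenter/t01/Sy/edge_mx_unit_affinely_indep.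
Qed.

Lemma setXrow_sub_closure_interior (R : realType) (n m : nat)
    (S : set 'rV[R]_n) (A : set 'rV[R]_m) :
  is_simplex S -> setXrow S A `<=` closure (setXrow S° A).
Proof.
move=> [v [v_indep ->]] x [Sx Ax] B Bx.
have [t t01 Bz] := nbhs_segment (row_mx (barycenter v) (rsubmx x)) Bx.
set y := (1 - t) *: lsubmx x + t *: barycenter v.
have z_eq : (1 - t) *: x + t *: row_mx (barycenter v) (rsubmx x) =
             row_mx y (rsubmx x).
  by rewrite -{1}(hsubmxK x) !scale_row_mx add_row_mx -scalerDl subrK scale1r.
exists (row_mx y (rsubmx x)); split; last by rewrite -z_eq.
split; rewrite ?row_mxKl ?row_mxKr //.
exact/interior_hull_to_barycenter/t01/Sx/edge_mx_unit_affinely_indep.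
Qed.

Lemma interiorI_simplex_neq0 (R : realType) (k : nat) (S T : set 'rV[R]_k) :
  is_simplex T -> S° `&` T !=set0 -> S° `&` T° !=set0.
Proof.
move=> T_simplex [y [Sy Ty]].
have [z [Tz Sz]] := simplex_sub_closure_interior T_simplex Ty (nbhs_interior Sy).
by exists z.
Qed.

Lemma closed_bigcup_locally_finite (T : topologicalType) (I : Type)
    (P : set I) (F : I -> set T) :
  (forall i, closed (F i)) ->
  (forall x : T, exists U : set T, nbhs x U /\ finite_set [set i | U `&` F i !=set0]) ->
  closed (\bigcup_(i in P) F i).
Proof.
move=> F_closed F_lf x x_cl.
have [U [Ux U_fin]] := F_lf x.
set P_U := P `&` [set i | U `&` F i !=set0].
have G_closed : closed (\bigcup_(S in F @` P_U) S).
  apply: closed_bigcup => [|_ [i _ <-] //].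
  by apply/finite_image/(sub_finite_set _ U_fin) => i [].
suff : closure (\bigcup_(S in F @` P_U) S) x.
  by rewrite -(closure_id _).1 // => -[_ [i [Pi _] <-] Fix]; exists i.
move=> B Bx; have [z [[i Pi Fiz] [Bz Uz]]] := x_cl _ (filterI Bx Ux).
by exists z; split=> //; exists (F i) => //; exists i => //; split=> //; exists z.
Qed.

Section ProjectedMesh.
Variables (R : realType) (n m : nat) (Um : set 'rV[R]_m).
Variables (I : Type) (Delta : I -> set 'rV[R]_(n + m)).

Local Notation proj i := (lsubmx @` Delta i).

Hypothesis Delta_cover : \bigcup_i Delta i = setXrow [set: 'rV[R]_n] Um.
Hypothesis proj_simplex : forall i, is_simplex (proj i).
Hypothesis proj_eq_or_interiorI0 : forall i j,
  proj i = proj j \/ (proj i)° `&` (proj j)° = set0.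

Lemma sub_setXrow_proj i : Delta i `<=` setXrow (proj i) Um.
Proof.
move=> x Dix; split; first by exists x.
by have [] : setXrow [set: 'rV[R]_n] Um x by rewrite -Delta_cover; exists i.
Qed.

Lemma proj_eq_of_interiorI i j : (proj i)° `&` proj j !=set0 -> proj j = proj i.
Proof.
move=> /(interiorI_simplex_neq0 (proj_simplex j)) [y yij].
have [//|ij0] := proj_eq_or_interiorI0 j i.
by move: yij; rewrite setIC ij0.
Qed.

Lemma setXrow_proj_sub_closure i :
  setXrow (proj i) Um `<=` closure (\bigcup_(j in [set j | proj j = proj i]) Delta j).
Proof.
move=> x /(setXrow_sub_closure_interior (proj_simplex i)).
apply: closureS => z [yint Uz].
have [j _ Djz] : (\bigcup_j Delta j) z by rewrite Delta_cover.
by exists j => //; apply: proj_eq_of_interiorI; exists (lsubmx z); split=> //; exists z.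
Qed.

End ProjectedMesh.

Theorem lemma3 (R : realType) (n m : nat) (Um : set 'rV[R]_m)
  (I : Type) (Delta : I -> set 'rV[R]_(n + m))
  (Q : Type) (D : Q -> set 'rV[R]_n) :
  is_polytope Um ->
  simplicial_mesh Delta (setXrow [set: 'rV[R]_n] Um) ->
  (* D is the family of the projections p(Delta_i) *)
  (forall i, exists q, lsubmx @` Delta i = D q) ->
  (forall q, exists i, D q = lsubmx @` Delta i) ->
  simplicial_mesh D [set: 'rV[R]_n] ->
  (forall i j, lsubmx @` Delta i = lsubmx @` Delta j \/
     (lsubmx @` Delta i)° `&` (lsubmx @` Delta j)° = set0) ->
  forall q : Q,
    setXrow (D q) Um = \bigcup_(i in [set i | lsubmx @` Delta i = D q]) Delta i.
Proof.
move=> _ [Delta_simplex [Delta_lf [Delta_cover _]]] proj_D D_proj [D_simplex _]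
  proj_dichotomy q.
have proj_simplex i : is_simplex (lsubmx @` Delta i).
  by have [q' ->] := proj_D i; exact: D_simplex.
have [i ->] := D_proj q.
apply/seteqP; split; last by move=> x [j <-]; exact: sub_setXrow_proj.
rewrite [X in _ `<=` X](closure_id _).1.
  exact: setXrow_proj_sub_closure.
apply: closed_bigcup_locally_finite Delta_lf => j.
exact: is_simplex_closed (Delta_simplex j).
Qed.
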